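(* Let $R=\{r\in\mathbb{Z}: 1<r\le 5040,\ G(r)\ge e^\gamma\}$. If $r\in R$ and $p\ge 11$ is prime, then $G(pr)<e^\gamma$.
   Context: For a positive integer $n$, $\sigma(n)=\sum_{d\mid n} d$. For integers $n>1$ define $G(n)=\dfrac{\sigma(n)}{n\log\log n}$ (natural logarithms). $\gamma$ is the Euler–Mascheroni constant, $e^\gamma=1.78107\ldots$. *)

From Stdlib Require Import Reals Lra Lia ZArith Znumtheory List Arith.
Open Scope R_scope.

Definition sigma (n : nat) : nat :=
  fold_right Nat.add 0%nat
    (filter (fun d => Nat.eqb (Nat.modulo n d) 0) (seq 1 n)).

Definition G (n : nat) : R :=
  INR (sigma n) / (INR n * ln (ln (INR n))).

(* Sequence H_{n+1} - ln (n+1), whose limit is the Euler–Mascheroni constant. *)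
Definition harm_minus_log (n : nat) : R :=
  sum_f_R0 (fun k => / INR (S k)) n - ln (INR (S n)).

(* Write c = 1.755.  The proof has three ingredients.
   - Arithmetic: sigma(p r) <= (p + 1) sigma(r) for p prime, because every
     divisor of p r is either a divisor d of r or of the form p d.
   - Analysis: e^gamma >= c.  The sequence H_(n+1) - ln(n+2) increases to
     gamma, so gamma >= H_40 - ln 41 >= 0.563, and exp(0.563) >= c.
   - A finite certificate.  [3, 5040] is covered by segments starting at
     t in {3, 12, 48, 120, 360, 840, 2520, 5040}; for each t we know
     a <= ln ln t and b <= ln ln (11 t).  For every r >= t in the segment either
     sigma(r) < c a r, which forces G(r) < c, or 12 sigma(r) < 11 c b r, which
     forces G(p r) < c since (p + 1)/p <= 12/11 and ln ln (p r) >= ln ln (11 t).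
   All numerical facts (bounds on exp obtained by halving the argument and
   squaring, bounds on sigma(r)) are checked by computation on rationals and
   transported to the reals by lemmas proved once and for all.
   The case r = 2 is trivial since ln ln 2 < 0, so G(2) <= 0. *)

From Stdlib Require Import Reals ZArith Znumtheory.
From Stdlib Require Import Lra Lia List Arith QArith Qround Qreals.
Local Open Scope nat_scope.

(** * Divisor sums *)

Definition divisors (n : nat) : list nat :=
  filter (fun d => Nat.eqb (n mod d) 0) (seq 1 n).

Lemma sigma_divisors (n : nat) : sigma n = list_sum (divisors n).
Proof. reflexivity. Qed.

Lemma in_divisors (n d : nat) :
  In d (divisors n) <-> 1 <= d <= n /\ n mod d = 0.
Proof. unfold divisors. rewrite filter_In, in_seq, Nat.eqb_eq. lia. Qed.

Lemma NoDup_divisors (n : nat) : NoDup (divisors n).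
Proof. apply NoDup_filter, seq_NoDup. Qed.

Lemma list_sum_incl (l m : list nat) :
  NoDup l -> incl l m -> list_sum l <= list_sum m.
Proof.
  revert m; induction l as [|a l IH]; intros m Hnd Hincl; simpl; [lia|].
  inversion Hnd as [|? ? Hal Hl]; subst.
  destruct (in_split a m (Hincl a (or_introl eq_refl))) as [m1 [m2 ->]].
  assert (Hrest : list_sum l <= list_sum (m1 ++ m2)).
  { apply IH; [assumption|]. intros x Hx.
    destruct (in_app_or _ _ _ (Hincl x (or_intror Hx))) as [|[<-|]];
      [apply in_or_app; auto | contradiction | apply in_or_app; auto]. }
  rewrite list_sum_app in *; simpl; lia.
Qed.

Lemma list_sum_map_mul (p : nat) (l : list nat) :
  list_sum (map (Nat.mul p) l) = p * list_sum l.
Proof. induction l as [|a l IH]; simpl; lia. Qed.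

Lemma Nat2Z_divide (a b : nat) : Nat.divide a b <-> (Z.of_nat a | Z.of_nat b)%Z.
Proof.
  split.
  - intros [k ->]. exists (Z.of_nat k). lia.
  - intros H. destruct (Nat.eq_dec a 0) as [->|Ha].
    + apply Z.divide_0_l in H. replace b with 0 by lia. apply Nat.divide_refl.
    + apply Nat.Lcm0.mod_divide. apply Z.mod_divide in H; [|lia].
      rewrite <- Nat2Z.inj_mod in H. lia.
Qed.

Lemma divide_mul_prime (p d r : nat) :
  prime (Z.of_nat p) -> Nat.divide d (p * r) -> Nat.divide d r \/ Nat.divide p d.
Proof.
  intros Hp Hd. rewrite !Nat2Z_divide in *. rewrite Nat2Z.inj_mul in Hd.
  destruct (Zdivide_dec (Z.of_nat p) (Z.of_nat d)) as [Hpd|Hpd]; [now right|left].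
  apply Gauss with (Z.of_nat p); [assumption|].
  apply rel_prime_sym, prime_rel_prime; assumption.
Qed.

Lemma divisors_mul_prime (p r : nat) : prime (Z.of_nat p) ->
  incl (divisors (p * r)) (divisors r ++ map (Nat.mul p) (divisors r)).
Proof.
  intros Hp d Hd. apply in_divisors in Hd as [Hdpr Hmod].
  apply Nat.Lcm0.mod_divide in Hmod.
  assert (Hr : 0 < r) by (destruct r; lia).
  apply in_or_app.
  destruct (divide_mul_prime p d r Hp Hmod) as [Hdr|[k ->]].
  - left. apply in_divisors.
    split; [split; [lia|apply Nat.divide_pos_le; auto]|].
    now apply Nat.Lcm0.mod_divide.
  - right. apply in_map_iff. exists k. split; [lia|].
    assert (Hkr : Nat.divide k r).
    { apply (Nat.mul_divide_cancel_l _ _ p); [lia|].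
      now rewrite (Nat.mul_comm p k). }
    apply in_divisors. split; [split; [lia|apply Nat.divide_pos_le; auto]|].
    now apply Nat.Lcm0.mod_divide.
Qed.

Lemma sigma_mul_prime (p r : nat) :
  prime (Z.of_nat p) -> sigma (p * r) <= (p + 1) * sigma r.
Proof.
  intros Hp. rewrite !sigma_divisors.
  eapply Nat.le_trans.
  - apply list_sum_incl; [apply NoDup_divisors | apply divisors_mul_prime, Hp].
  - rewrite list_sum_app, list_sum_map_mul. lia.
Qed.

(* Divisors come in pairs (d, n / d) with d <= sqrt n; summing the pairs
   over d <= sqrt n (counting the square root once) bounds sigma(n). *)
Definition pair_sum (n d : nat) : nat :=
  if Nat.eqb (n mod d) 0 then d + (if Nat.eqb (d * d) n then 0 else n / d) else 0.

Definition sigma_bound (n : nat) : nat :=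
  list_sum (map (pair_sum n) (seq 1 (Nat.sqrt n))).

Lemma pair_sum_split (n : nat) (l : list nat) :
  let small := filter (fun d => Nat.eqb (n mod d) 0) l in
  list_sum (map (pair_sum n) l) =
  list_sum (small ++ map (fun d => n / d)
                           (filter (fun d => negb (Nat.eqb (d * d) n)) small)).
Proof.
  induction l as [|d l IH]; simpl in *; [reflexivity|].
  rewrite list_sum_app in *. unfold pair_sum at 1.
  destruct (Nat.eqb (n mod d) 0); simpl; [|exact IH].
  destruct (Nat.eqb (d * d) n); simpl; rewrite IH; lia.
Qed.

Lemma sigma_le_bound (n : nat) : sigma n <= sigma_bound n.
Proof.
  unfold sigma_bound. rewrite pair_sum_split, sigma_divisors.
  apply list_sum_incl; [apply NoDup_divisors|].
  intros d Hd. apply in_divisors in Hd as [Hdn Hmod].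
  assert (Hn : n = d * (n / d)) by (apply Nat.Div0.div_exact; lia).
  set (e := n / d) in Hn.
  apply in_or_app.
  destruct (Nat.le_gt_cases (d * d) n) as [Hsq|Hsq].
  - left. apply filter_In. rewrite in_seq, Nat.eqb_eq.
    pose proof (proj1 (Nat.sqrt_le_square n d) Hsq). lia.
  - right. apply in_map_iff. exists e.
    assert (He : e * e < n) by nia.
    split.
    + rewrite Hn at 1. apply Nat.div_mul. lia.
    + apply filter_In. rewrite filter_In, in_seq, Nat.eqb_eq, Bool.negb_true_iff,
        Nat.eqb_neq.
      pose proof (proj1 (Nat.sqrt_le_square n e) ltac:(lia)).
      split; [split; [split; [nia|lia]|]|lia].
      rewrite Hn at 1. apply Nat.Div0.mod_mul.
Qed.

Definition pair_sumZ (n d : Z) : Z :=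
  if Z.eqb (n mod d) 0 then d + (if Z.eqb (d * d) n then 0 else n / d) else 0.

Definition sigma_boundZ (n : Z) : Z :=
  fold_right Z.add 0%Z
    (map (pair_sumZ n) (map Z.of_nat (seq 1 (Z.to_nat (Z.sqrt n))))).

Lemma Z_sqrt_of_nat (n : nat) : Z.sqrt (Z.of_nat n) = Z.of_nat (Nat.sqrt n).
Proof.
  apply Z.sqrt_unique. pose proof (Nat.sqrt_spec n (Nat.le_0_l n)) as [H1 H2].
  split; nia.
Qed.

Lemma sigma_boundZ_spec (n : nat) :
  sigma_boundZ (Z.of_nat n) = Z.of_nat (sigma_bound n).
Proof.
  unfold sigma_boundZ, sigma_bound. rewrite Z_sqrt_of_nat, Nat2Z.id.
  induction (seq 1 (Nat.sqrt n)) as [|d l IH]; simpl; [reflexivity|].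
  rewrite IH, Nat2Z.inj_add. f_equal.
  unfold pair_sumZ, pair_sum.
  rewrite <- Nat2Z.inj_mod, <- Nat2Z.inj_mul, <- Nat2Z.inj_div.
  destruct (Nat.eqb_spec (n mod d) 0), (Nat.eqb_spec (d * d) n),
    (Z.eqb_spec (Z.of_nat (n mod d)) 0), (Z.eqb_spec (Z.of_nat (d * d)) (Z.of_nat n));
    lia.
Qed.

(** * Certified rational bounds for exp *)

Local Open Scope R_scope.

(* exp y <= 1 / (1 - y) on [0, 1), from exp (- y) >= 1 - y. *)
Lemma exp_le_inv_one_minus (y : R) : 0 <= y < 1 -> exp y <= / (1 - y).
Proof.
  intros Hy. pose proof (exp_ineq1_le (- y)).
  assert (Hprod : exp y * exp (- y) = 1) by (rewrite <- exp_plus, Rplus_opp_r; apply exp_0).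
  pose proof (exp_pos y).
  apply (Rmult_le_reg_r (1 - y)); [lra|]. rewrite Rinv_l by lra. nra.
Qed.

Lemma exp_double (x : R) : exp x = exp (x / 2) * exp (x / 2).
Proof. rewrite <- exp_plus. f_equal. field. Qed.

Local Open Scope Q_scope.

Lemma Q2R_inject_Z (z : Z) : Q2R (inject_Z z) = IZR z.
Proof. unfold Q2R; simpl. field. Qed.

Lemma Q2R_half (x : Q) : Q2R (x / 2) = (Q2R x / 2)%R.
Proof.
  rewrite Q2R_div by (unfold Qeq; simpl; lia). f_equal. unfold Q2R; simpl. field.
Qed.

Definition Qltb (x y : Q) : bool := negb (Qle_bool y x).

Lemma Qltb_Rlt (x y : Q) : Qltb x y = true -> (Q2R x < Q2R y)%R.
Proof.
  unfold Qltb. rewrite Bool.negb_true_iff. intros H. apply Qlt_Rlt, Qnot_le_lt.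
  intros Hle. apply Qle_bool_iff in Hle. congruence.
Qed.

Lemma Qle_bool_Rle (x y : Q) : Qle_bool x y = true -> (Q2R x <= Q2R y)%R.
Proof. intros H. now apply Qle_Rle, Qle_bool_iff. Qed.

(* Rounding to a fixed grid keeps the numbers in the iterated squarings small;
   the grid is fine enough that the 2^30-fold amplification of a rounding
   error stays negligible. *)
Definition grid : positive := 10 ^ 20.

Definition round_up (q : Q) : Q := Qceiling (q * inject_Z (Zpos grid)) # grid.
Definition round_down (q : Q) : Q := Qfloor (q * inject_Z (Zpos grid)) # grid.

Lemma round_up_ge (q : Q) : (Q2R q <= Q2R (round_up q))%R.
Proof.
  apply Qle_Rle. pose proof (Qle_ceiling (q * inject_Z (Zpos grid))) as H.
  unfold round_up, Qle in *. simpl in *. nia.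
Qed.

Lemma round_down_le (q : Q) : (Q2R (round_down q) <= Q2R q)%R.
Proof.
  apply Qle_Rle. pose proof (Qfloor_le (q * inject_Z (Zpos grid))) as H.
  unfold round_down, Qle in *. simpl in *. nia.
Qed.

Lemma round_down_nonneg (q : Q) : 0 <= q -> (0 <= Q2R (round_down q))%R.
Proof.
  intros Hq. rewrite <- RMicromega.Q2R_0. apply Qle_Rle.
  pose proof (Qfloor_resp_le 0 (q * inject_Z (Zpos grid))) as H.
  unfold round_down, Qle. simpl. rewrite Z.mul_1_r. apply H.
  apply Qmult_le_0_compat; [exact Hq | discriminate].
Qed.

(* exp x = exp (x / 2^k) ^ (2^k): bound exp at x / 2^k by 1 / (1 - y) from
   above or by 1 + y from below, then square k times, rounding outwards. *)
Fixpoint exp_upperQ (k : nat) (x : Q) : Q :=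
  match k with
  | O => round_up (/ (1 - x))
  | S k' => let u := exp_upperQ k' (x / 2) in round_up (u * u)
  end.

Fixpoint exp_lowerQ (k : nat) (x : Q) : Q :=
  match k with
  | O => round_down (1 + x)
  | S k' => let l := exp_lowerQ k' (x / 2) in round_down (l * l)
  end.

Local Close Scope Q_scope.

Lemma exp_le_upperQ (k : nat) (x : Q) :
  0 <= Q2R x < 2 ^ k -> exp (Q2R x) <= Q2R (exp_upperQ k x).
Proof.
  revert x; induction k as [|k IH]; intros x Hx; simpl exp_upperQ.
  - eapply Rle_trans; [|apply round_up_ge].
    rewrite Q2R_inv, Q2R_minus, RMicromega.Q2R_1.
    + apply exp_le_inv_one_minus. simpl in Hx. lra.
    + intros Heq. apply Qeq_eqR in Heq.
      rewrite Q2R_minus, RMicromega.Q2R_1, RMicromega.Q2R_0 in Heq. simpl in Hx. lra.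
  - eapply Rle_trans; [|apply round_up_ge]. rewrite Q2R_mult.
    assert (Hhalf : exp (Q2R (x / 2)) <= Q2R (exp_upperQ k (x / 2))).
    { apply IH. rewrite Q2R_half. simpl in Hx. lra. }
    rewrite Q2R_half in Hhalf. pose proof (exp_pos (Q2R x / 2)).
    rewrite exp_double. apply Rmult_le_compat; lra.
Qed.

Lemma exp_ge_lowerQ (k : nat) (x : Q) :
  (0 <= x)%Q -> 0 <= Q2R (exp_lowerQ k x) <= exp (Q2R x).
Proof.
  revert x; induction k as [|k IH]; intros x Hx; simpl exp_lowerQ.
  - split.
    + apply round_down_nonneg. rewrite <- (Qplus_0_l 0). apply Qplus_le_compat; [discriminate|exact Hx].
    + eapply Rle_trans; [apply round_down_le|].
      rewrite Q2R_plus, RMicromega.Q2R_1. apply exp_ineq1_le.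
  - assert (Hx2 : (0 <= x / 2)%Q) by (apply Qle_shift_div_l; [reflexivity|now rewrite Qmult_0_l]).
    destruct (IH (x / 2)%Q Hx2) as [Hl0 Hl]. rewrite Q2R_half in Hl.
    split.
    + apply round_down_nonneg. apply Qmult_le_0_compat; apply Rle_Qle;
        rewrite RMicromega.Q2R_0; exact Hl0.
    + eapply Rle_trans; [apply round_down_le|]. rewrite Q2R_mult, exp_double.
      apply Rmult_le_compat; lra.
Qed.

Definition halvings : nat := 30.

(* The arguments accepted by exp_le_upperQ with halvings squarings. *)
Definition in_range (x : Q) : bool :=
  Qle_bool 0 x && Qltb x (inject_Z (2 ^ Z.of_nat halvings)).

Lemma in_range_sound (x : Q) : in_range x = true -> 0 <= Q2R x < 2 ^ halvings.
Proof.
  unfold in_range. intros H. apply andb_prop in H as [H0 H1].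
  apply Qle_bool_Rle in H0. apply Qltb_Rlt in H1.
  rewrite RMicromega.Q2R_0 in H0. rewrite Q2R_inject_Z, <- pow_IZR in H1. lra.
Qed.

Lemma exp_le_compat (x y : R) : x <= y -> exp x <= exp y.
Proof.
  intros [H|H]; [left; now apply exp_increasing | right; now subst].
Qed.

Lemma ln_le (x y : R) : 0 < x -> x <= y -> ln x <= ln y.
Proof.
  intros Hx [H|H]; [left; now apply ln_increasing | right; now subst].
Qed.

Lemma lnln_ge (a t : R) : exp (exp a) <= t -> a <= ln (ln t).
Proof.
  intros H. rewrite <- (ln_exp a).
  apply ln_le; [apply exp_pos|]. rewrite <- (ln_exp (exp a)).
  apply ln_le; [apply exp_pos|exact H].
Qed.

Definition lnln_lower_ok (a : Q) (t : Z) : bool :=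
  let u := exp_upperQ halvings a in
  Qltb 0 a && in_range a && in_range u &&
  Qle_bool (exp_upperQ halvings u) (inject_Z t).

Lemma lnln_lower_ok_sound (a : Q) (t : Z) :
  lnln_lower_ok a t = true -> 0 < Q2R a /\ exp (exp (Q2R a)) <= IZR t.
Proof.
  unfold lnln_lower_ok. intros H.
  apply andb_prop in H as [H Ht]. apply andb_prop in H as [H Hu].
  apply andb_prop in H as [Hpos Ha].
  apply Qltb_Rlt in Hpos. rewrite RMicromega.Q2R_0 in Hpos.
  apply Qle_bool_Rle in Ht. rewrite Q2R_inject_Z in Ht.
  split; [exact Hpos|].
  eapply Rle_trans; [apply exp_le_compat, exp_le_upperQ, in_range_sound, Ha|].
  eapply Rle_trans; [apply exp_le_upperQ, in_range_sound, Hu|exact Ht].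
Qed.

(** * The lower bound e^gamma >= 1.755 *)

Definition harmonic (n : nat) : R := sum_f_R0 (fun k => / INR (S k)) n.

(* H_(n+1) - ln(n+2): it increases with n and stays below harm_minus_log n,
   hence below gamma in the limit. *)
Definition harm_minus_log_next (n : nat) : R := harmonic n - ln (INR (S (S n))).

Lemma ln_succ_le (m : R) : 0 < m -> ln (m + 1) <= ln m + / m.
Proof.
  intros Hm. rewrite <- (ln_exp (ln m + / m)).
  apply ln_le; [lra|]. rewrite exp_plus, exp_ln by lra.
  pose proof (exp_ineq1_le (/ m)).
  assert (m * (1 + / m) = m + 1) by (field; lra). nra.
Qed.

Lemma harm_minus_log_next_incr (n : nat) :
  harm_minus_log_next n <= harm_minus_log_next (S n).
Proof.
  unfold harm_minus_log_next, harmonic. rewrite tech5, (S_INR (S (S n))).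
  assert (Hm : 0 < INR (S (S n))) by (apply lt_0_INR; lia).
  pose proof (ln_succ_le _ Hm). lra.
Qed.

Lemma harm_minus_log_next_le (n m : nat) :
  (m <= n)%nat -> harm_minus_log_next m <= harm_minus_log n.
Proof.
  intros Hmn. apply Rle_trans with (harm_minus_log_next n).
  - induction Hmn; [lra|]. pose proof (harm_minus_log_next_incr m0). lra.
  - unfold harm_minus_log_next, harm_minus_log.
    assert (ln (INR (S n)) <= ln (INR (S (S n)))).
    { apply ln_le; [apply lt_0_INR; lia | apply le_INR; lia]. }
    unfold harmonic. lra.
Qed.

Local Open Scope Q_scope.

Fixpoint harmonicQ (n : nat) : Q :=
  match n with
  | O => 1
  | S m => harmonicQ m + / inject_Z (Z.of_nat (S n))
  end.

Lemma harmonicQ_spec (n : nat) : Q2R (harmonicQ n) = harmonic n.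
Proof.
  unfold harmonic. induction n as [|m IH]; cbn [harmonicQ].
  - unfold Q2R; simpl. field.
  - rewrite Q2R_plus, IH, tech5, Q2R_inv, Q2R_inject_Z, <- INR_IZR_INZ; [reflexivity|].
    unfold Qeq; simpl. lia.
Qed.

Definition gamma_lowerQ : Q := 563 # 1000.

Local Close Scope Q_scope.

(* H_40 - ln 41 >= 0.563, i.e. exp (H_40 - 0.563) >= 41. *)
Lemma harm_minus_log_next_39 : Q2R gamma_lowerQ <= harm_minus_log_next 39.
Proof.
  set (x := (harmonicQ 39 - gamma_lowerQ)%Q).
  assert (Hx : (0 <= x)%Q) by (vm_compute; discriminate).
  assert (H41 : Qle_bool (inject_Z 41) (exp_lowerQ halvings x) = true)
    by (vm_compute; reflexivity).
  apply Qle_bool_Rle in H41. rewrite Q2R_inject_Z in H41.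
  pose proof (exp_ge_lowerQ halvings x Hx) as Hexp.
  assert (Hln : ln (INR 41) <= Q2R x).
  { rewrite <- (ln_exp (Q2R x)). apply ln_le; [apply lt_0_INR; lia|].
    rewrite INR_IZR_INZ. simpl Z.of_nat. lra. }
  unfold x in Hln. rewrite Q2R_minus, harmonicQ_spec in Hln.
  unfold harm_minus_log_next. lra.
Qed.

Lemma gamma_ge (gamma : R) : Un_cv harm_minus_log gamma -> Q2R gamma_lowerQ <= gamma.
Proof.
  intros Hcv. apply Rnot_lt_le. intros Hlt.
  destruct (Hcv (Q2R gamma_lowerQ - gamma)) as [N HN]; [lra|].
  specialize (HN (Nat.max N 39) (Nat.le_max_l _ _)).
  pose proof (harm_minus_log_next_le (Nat.max N 39) 39 (Nat.le_max_r _ _)).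
  pose proof harm_minus_log_next_39.
  unfold R_dist in HN. apply Rabs_def2 in HN. lra.
Qed.

Definition exp_gamma_lowerQ : Q := 1755 # 1000.

Lemma exp_gamma_ge (gamma : R) :
  Un_cv harm_minus_log gamma -> Q2R exp_gamma_lowerQ <= exp gamma.
Proof.
  intros Hcv.
  assert (H : Qle_bool exp_gamma_lowerQ (exp_lowerQ halvings gamma_lowerQ) = true)
    by (vm_compute; reflexivity).
  apply Qle_bool_Rle in H.
  pose proof (exp_ge_lowerQ halvings gamma_lowerQ ltac:(vm_compute; discriminate)).
  pose proof (exp_le_compat _ _ (gamma_ge gamma Hcv)). lra.
Qed.

Lemma G_lt (n : nat) (c L : R) :
  (0 < n)%nat -> 0 < L -> L <= ln (ln (INR n)) ->
  INR (sigma n) < c * L * INR n -> G n < c.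
Proof.
  intros Hn HL HLn Hs.
  assert (Hn' : 0 < INR n) by (apply lt_0_INR; lia).
  pose proof (pos_INR (sigma n)).
  assert (Hden : 0 < INR n * ln (ln (INR n))) by nra.
  unfold G, Rdiv. apply (Rmult_lt_reg_r (INR n * ln (ln (INR n)))); [exact Hden|].
  rewrite Rmult_assoc, Rinv_l by lra. nra.
Qed.

Lemma G_segment (c a b t : R) (r p : nat) :
  exp (exp a) <= t -> exp (exp b) <= 11 * t -> 0 < a -> 0 < b ->
  t <= INR r -> prime (Z.of_nat p) -> (11 <= p)%nat ->
  INR (sigma r) < c * a * INR r \/ 12 * INR (sigma r) < 11 * c * b * INR r ->
  G r < c \/ G (p * r) < c.
Proof.
  intros Hta Htb Ha Hb Htr Hp Hp11 Hs.
  pose proof (exp_pos (exp a)).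
  assert (Hr : (0 < r)%nat) by (apply INR_lt; simpl; lra).
  destruct Hs as [Hs|Hs].
  - left. apply (G_lt r c a); [exact Hr|exact Ha| |exact Hs].
    apply lnln_ge. lra.
  - right.
    assert (HP : 11 <= INR p) by (replace 11 with (INR 11) by (simpl; lra); apply le_INR, Hp11).
    pose proof (le_INR _ _ (sigma_mul_prime p r Hp)) as Hsig.
    rewrite mult_INR, plus_INR in Hsig. simpl (INR 1) in Hsig.
    apply (G_lt (p * r) c b); [nia|exact Hb| |].
    + apply lnln_ge. rewrite mult_INR. nra.
    + rewrite mult_INR. pose proof (pos_INR (sigma r)). nra.
Qed.

(** * The finite certificate *)

Record segment := Segment { seg_start : Z; seg_lnln : Q; seg_lnln11 : Q }.

(* Listed from the last segment down, so that the search in [certified]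
   meets the segment containing r first. *)
Definition segments : list segment :=
  Segment 5040 (2143 # 1000) (2390 # 1000) :: Segment 2520 (2058 # 1000) (2325 # 1000) ::
  Segment 840 (1907 # 1000) (2211 # 1000) :: Segment 360 (1772 # 1000) (2114 # 1000) ::
  Segment 120 (1566 # 1000) (1972 # 1000) :: Segment 48 (1353 # 1000) (1835 # 1000) ::
  Segment 12 (910 # 1000) (1585 # 1000) :: Segment 3 (94 # 1000) (1251 # 1000) :: nil.

Definition segment_ok (s : segment) : bool :=
  lnln_lower_ok (seg_lnln s) (seg_start s) &&
  lnln_lower_ok (seg_lnln11 s) (11 * seg_start s).

Local Open Scope Q_scope.

Definition sigma_test (s : segment) (sig r : Z) : bool :=
  Qltb (inject_Z sig) (exp_gamma_lowerQ * seg_lnln s * inject_Z r) ||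
  Qltb (12 * inject_Z sig) (11 * exp_gamma_lowerQ * seg_lnln11 s * inject_Z r).

Local Close Scope Q_scope.

Definition certified (r : Z) : bool :=
  let sig := sigma_boundZ r in
  existsb (fun s => Z.leb (seg_start s) r && sigma_test s sig r) segments.

Fixpoint certified_from (lo : Z) (len : nat) : bool :=
  match len with
  | O => true
  | S len' => certified lo && certified_from (lo + 1) len'
  end.

Lemma certified_from_sound (len : nat) (lo r : Z) :
  certified_from lo len = true -> (lo <= r < lo + Z.of_nat len)%Z -> certified r = true.
Proof.
  revert lo; induction len as [|len IH]; intros lo H Hr; [lia|].
  cbn [certified_from] in H. apply andb_prop in H as [Hlo Hrest].
  destruct (Z.eq_dec r lo) as [->|Hne]; [exact Hlo|].
  apply (IH (lo + 1)%Z); [exact Hrest|lia].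
Qed.

Lemma segments_ok : forallb segment_ok segments = true.
Proof. vm_compute. reflexivity. Qed.

Lemma all_certified : certified_from 3 (5040 - 2) = true.
Proof. vm_compute. reflexivity. Qed.

Lemma certified_segment (r : nat) : (3 <= r <= 5040)%nat ->
  exists s, In s segments /\ (seg_start s <= Z.of_nat r)%Z /\
            sigma_test s (sigma_boundZ (Z.of_nat r)) (Z.of_nat r) = true.
Proof.
  intros Hr.
  pose proof (certified_from_sound _ _ (Z.of_nat r) all_certified ltac:(lia)) as Hcr.
  unfold certified in Hcr. apply existsb_exists in Hcr as [s [Hs Hsr]].
  apply andb_prop in Hsr as [Hstart Htest]. apply Z.leb_le in Hstart.
  now exists s.
Qed.

Lemma sigma_test_sound (s : segment) (r : nat) :
  sigma_test s (sigma_boundZ (Z.of_nat r)) (Z.of_nat r) = true ->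
  INR (sigma r) < Q2R exp_gamma_lowerQ * Q2R (seg_lnln s) * INR r \/
  12 * INR (sigma r) < 11 * Q2R exp_gamma_lowerQ * Q2R (seg_lnln11 s) * INR r.
Proof.
  assert (Hsig : INR (sigma r) <= IZR (sigma_boundZ (Z.of_nat r))).
  { rewrite sigma_boundZ_spec, <- INR_IZR_INZ. apply le_INR, sigma_le_bound. }
  unfold sigma_test. intros H. apply Bool.orb_prop in H as [H|H];
    apply Qltb_Rlt in H; rewrite !Q2R_mult, !Q2R_inject_Z in H;
    rewrite <- (INR_IZR_INZ r) in H; [left|right].
  - lra.
  - replace (Q2R 12) with 12 in H by (unfold Q2R; simpl; lra).
    replace (Q2R 11) with 11 in H by (unfold Q2R; simpl; lra). lra.
Qed.

Lemma certificate_sound (r p : nat) :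
  (3 <= r <= 5040)%nat -> prime (Z.of_nat p) -> (11 <= p)%nat ->
  G r < Q2R exp_gamma_lowerQ \/ G (p * r) < Q2R exp_gamma_lowerQ.
Proof.
  intros Hr Hp Hp11.
  destruct (certified_segment r Hr) as [s [Hs [Hstart Htest]]].
  apply IZR_le in Hstart. rewrite <- INR_IZR_INZ in Hstart.
  pose proof segments_ok as Hsegs. rewrite forallb_forall in Hsegs.
  specialize (Hsegs s Hs). apply andb_prop in Hsegs as [Ha Hb].
  apply lnln_lower_ok_sound in Ha as [Ha Hta], Hb as [Hb Htb].
  rewrite mult_IZR in Htb.
  exact (G_segment _ _ _ _ r p Hta Htb Ha Hb Hstart Hp Hp11 (sigma_test_sound s r Htest)).
Qed.

Lemma G_2_nonpos : G 2 <= 0.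
Proof.
  unfold G. replace (INR 2) with 2 by (simpl; lra).
  assert (Hl2 : 0 < ln 2) by (rewrite <- ln_1; apply ln_increasing; lra).
  assert (Hl2' : ln 2 < 1).
  { rewrite <- (ln_exp 1). apply ln_increasing; [lra|].
    pose proof (exp_ineq1 1 ltac:(lra)). lra. }
  assert (Hll : ln (ln 2) < 0) by (rewrite <- ln_1; apply ln_increasing; lra).
  pose proof (pos_INR (sigma 2)).
  assert (/ (2 * ln (ln 2)) < 0) by (apply Rinv_lt_0_compat; lra).
  unfold Rdiv. nra.
Qed.

Theorem lemma3 (gamma : R) (Hgamma : Un_cv harm_minus_log gamma) :
  forall r p : nat,
    (1 < r <= 5040)%nat ->
    G r >= exp gamma ->
    prime (Z.of_nat p) ->
    (11 <= p)%nat ->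
    G (p * r) < exp gamma.
Proof.
  intros r p Hr HGr Hp Hp11.
  pose proof (exp_gamma_ge gamma Hgamma) as Hg.
  destruct (Nat.eq_dec r 2) as [->|Hr2].
  - pose proof G_2_nonpos. pose proof (exp_pos gamma). lra.
  - destruct (certificate_sound r p ltac:(lia) Hp Hp11); lra.
Qed.
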